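(* There is a unique positive smooth function $\psi$ on $\mathbb{R}$ solving the Cauchy problem $L_0(\psi)=0$, $\psi(0)=1$, $\psi'(0)=0$. Moreover: (1) $\psi(-v)=\psi(v)>0$ for all $v\in\mathbb{R}$; (2) there exist a constant $v_0>0$ large enough and a unique function $R\in L^\infty([v_0,+\infty[)$ with $R(v)=O(|v|^{-2})$ such that $$\psi(v)=c|v|^{\gamma+1}\big(1+R(v)\big)\qquad\text{for all }|v|\geqslant v_0,$$ where $c$ is a positive constant.
   Context: Fix $\gamma>1/2$. Let $\tilde W(v)=\frac{\gamma(\gamma+1)}{1+v^2}$ for $v\in\mathbb{R}$ and let $L_0$ be the differential operator $L_0(\psi)=-\psi''+\tilde W\psi$ on $\mathbb{R}$. *)

From Stdlib Require Import Reals.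
From Coquelicot Require Import Coquelicot.
Open Scope R_scope.

Definition Wt (gamma v : R) : R := gamma * (gamma + 1) / (1 + v ^ 2).

Definition smooth (f : R -> R) : Prop := forall (n : nat) (x : R), ex_derive_n f n x.

Definition L0 (gamma : R) (psi : R -> R) (v : R) : R :=
  - Derive_n psi 2 v + Wt gamma v * psi v.

Definition cauchy_sol (gamma : R) (psi : R -> R) : Prop :=
  (forall v, L0 gamma psi v = 0) /\ psi 0 = 1 /\ Derive psi 0 = 0.

Definition remainder_ok (gamma : R) (psi : R -> R) (c v0 : R) (Rm : R -> R) : Prop :=
  (exists B, forall v, v0 <= Rabs v -> Rabs (Rm v) <= B) /\
  (exists K M, forall v, M <= Rabs v -> Rabs (Rm v) <= K * / (Rabs v ^ 2)) /\
  (forall v, v0 <= Rabs v -> psi v = c * Rpower (Rabs v) (gamma + 1) * (1 + Rm v)).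

From Stdlib Require Import Reals Lra Lia Psatz Factorial.
From Coquelicot Require Import Coquelicot.
Open Scope R_scope.

(* psi is the Picard series sum_n psi_n with psi_0 = 1 and psi_(n+1) = int_0 int_0 W psi_n.
   Since 0 <= W <= k := gamma (gamma + 1), psi_n is dominated by the n-th term of
   cosh (sqrt k v), so the series may be differentiated termwise, and psi >= 1.  Gronwall's
   lemma for the energy d^2 + d'^2 of the difference of two solutions gives uniqueness, hence
   evenness as W is even.  For v >= 0, Sturm comparison with (1 + m v^2)^((gamma+1)/2),
   m = (2 gamma - 1) / gamma and m = gamma, traps psi between two multiples of v^(gamma+1).
   The Wronskian G of psi and v^(gamma+1) satisfies
   G' = - gamma (gamma+1) psi v^(gamma-1) / (1 + v^2) = O(v^(2 gamma - 2)), so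
   G = O(v^(2 gamma - 1)) and (psi / v^(gamma+1))' = G / v^(2 gamma + 2) = O(v^-3): the ratio
   converges, with error O(v^-2), to a limit c bounded below by its positive lower bound. *)

Lemma continuity_pt_of_is_derive (f : R -> R) (x l : R) :
  is_derive f x l -> continuity_pt f x.
Proof.
  intros Hf. apply continuity_pt_filterlim.
  apply (ex_derive_continuous (V := R_NormedModule)). now exists l.
Qed.

Lemma continuous_of_is_derive (f df : R -> R) :
  (forall x, is_derive f x (df x)) -> forall x, continuous f x.
Proof.
  intros Hf x. apply (ex_derive_continuous (V := R_NormedModule)). now exists (df x).
Qed.

Lemma is_derive_mult_R (f g : R -> R) (x df dg : R) :
  is_derive f x df -> is_derive g x dg ->
  is_derive (fun t => f t * g t) x (df * g x + f x * dg).
Proof. intros Hf Hg. exact (is_derive_mult f g x df dg Hf Hg Rmult_comm). Qed.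

Lemma is_derive_comp_opp (f : R -> R) (x df : R) :
  is_derive f (- x) df -> is_derive (fun t => f (- t)) x (- df).
Proof.
  intros Hf. replace (- df) with (scal (-1) df) by (unfold scal; simpl; unfold mult; simpl; ring).
  apply (is_derive_comp f Ropp); [exact Hf|]. auto_derive; [trivial | ring].
Qed.

Lemma le_of_derive_nonneg (f df : R -> R) (x y : R) : x <= y ->
  (forall t, x <= t <= y -> is_derive f t (df t)) ->
  (forall t, x <= t <= y -> 0 <= df t) -> f x <= f y.
Proof.
  intros Hxy Hf Hdf.
  destruct (MVT_gen f x y df) as [c [Hc Hmvt]];
    rewrite ?Rmin_left, ?Rmax_right in * by lra.
  - intros t Ht. apply Hf; lra.
  - intros t Ht. apply (continuity_pt_of_is_derive f t (df t)), Hf; lra.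
  - assert (0 <= df c * (y - x)) by (apply Rmult_le_pos; [apply Hdf|]; lra). lra.
Qed.

Lemma ge_of_derive_nonpos (f df : R -> R) (x y : R) : x <= y ->
  (forall t, x <= t <= y -> is_derive f t (df t)) ->
  (forall t, x <= t <= y -> df t <= 0) -> f y <= f x.
Proof.
  intros Hxy Hf Hdf.
  enough (- f x <= - f y) by lra.
  apply (le_of_derive_nonneg (fun t => - f t) (fun t => - df t)); auto.
  - intros t Ht. now apply (is_derive_opp f), Hf.
  - intros t Ht. specialize (Hdf t Ht). lra.
Qed.

Lemma nonneg_of_derive2_nonneg (h h1 h2 : R -> R) :
  (forall t, is_derive h t (h1 t)) -> (forall t, is_derive h1 t (h2 t)) ->
  (forall t, 0 <= h2 t) -> h 0 = 0 -> h1 0 = 0 ->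
  forall x, 0 <= h x /\ 0 <= x * h1 x.
Proof.
  intros Dh Dh1 Hh2 H0 H10.
  assert (Hpos : forall x, 0 <= x -> 0 <= h1 x).
  { intros x Hx. rewrite <- H10. apply (le_of_derive_nonneg h1 h2); auto. }
  assert (Hneg : forall x, x <= 0 -> h1 x <= 0).
  { intros x Hx. rewrite <- H10. apply (le_of_derive_nonneg h1 h2); auto. }
  intros x. destruct (Rle_lt_dec 0 x) as [Hx | Hx].
  - split; [|specialize (Hpos x Hx); nra].
    rewrite <- H0. apply (le_of_derive_nonneg h h1); auto.
    intros t Ht. apply Hpos. lra.
  - split; [|assert (h1 x <= 0) by (apply Hneg; lra); nra].
    rewrite <- H0. apply (ge_of_derive_nonpos h h1); auto; [lra|].
    intros t Ht. apply Hneg. lra.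
Qed.

Lemma second_derive_domination (h h1 h2 g g1 g2 : R -> R) :
  (forall t, is_derive h t (h1 t)) -> (forall t, is_derive h1 t (h2 t)) ->
  (forall t, is_derive g t (g1 t)) -> (forall t, is_derive g1 t (g2 t)) ->
  (forall t, Rabs (h2 t) <= g2 t) ->
  h 0 = 0 -> h1 0 = 0 -> g 0 = 0 -> g1 0 = 0 ->
  forall x, Rabs (h x) <= g x /\ Rabs (h1 x) <= Rabs (g1 x).
Proof.
  intros Dh Dh1 Dg Dg1 Hdom H0 H10 G0 G10 x.
  assert (Hh2 : forall t, - g2 t <= h2 t <= g2 t) by (intros t; apply Rabs_le_between, Hdom).
  destruct (nonneg_of_derive2_nonneg (fun t => g t - h t) (fun t => g1 t - h1 t)
              (fun t => g2 t - h2 t)) with (x := x) as [Hm Hm1].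
  1, 2: intros t; now apply (is_derive_minus (V := R_NormedModule)).
  1: intros t; specialize (Hh2 t); lra.
  1, 2: lra.
  destruct (nonneg_of_derive2_nonneg (fun t => g t + h t) (fun t => g1 t + h1 t)
              (fun t => g2 t + h2 t)) with (x := x) as [Hp Hp1].
  1, 2: intros t; now apply (is_derive_plus (V := R_NormedModule)).
  1: intros t; specialize (Hh2 t); lra.
  1, 2: lra.
  split; [apply Rabs_le; lra|].
  destruct (Rtotal_order x 0) as [Hx | [-> | Hx]].
  - rewrite (Rabs_left1 (g1 x)) by nra. apply Rabs_le. nra.
  - rewrite H10. rewrite Rabs_R0. apply Rabs_pos.
  - rewrite (Rabs_pos_eq (g1 x)) by nra. apply Rabs_le. nra.
Qed.

Lemma abs_sub_le_of_abs_derive_le (f df h dh : R -> R) (x y : R) : x <= y ->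
  (forall t, x <= t <= y -> is_derive f t (df t)) ->
  (forall t, x <= t <= y -> is_derive h t (dh t)) ->
  (forall t, x <= t <= y -> Rabs (df t) <= dh t) ->
  Rabs (f y - f x) <= h y - h x.
Proof.
  intros Hxy Df Dh Hdom.
  assert (Hm : h x - f x <= h y - f y).
  { apply (le_of_derive_nonneg (fun t => h t - f t) (fun t => dh t - df t)); auto.
    - intros t Ht. apply (is_derive_minus (V := R_NormedModule)); auto.
    - intros t Ht. specialize (Hdom t Ht). apply Rabs_le_between in Hdom. lra. }
  assert (Hp : h x + f x <= h y + f y).
  { apply (le_of_derive_nonneg (fun t => h t + f t) (fun t => dh t + df t)); auto.
    - intros t Ht. apply (is_derive_plus (V := R_NormedModule)); auto.
    - intros t Ht. specialize (Hdom t Ht). apply Rabs_le_between in Hdom. lra. }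
  apply Rabs_le. lra.
Qed.

(* [f + h] is nondecreasing and [f - h] nonincreasing; the limit is the supremum of [f + h]. *)
Lemma ex_lim_of_sub_le (f h : R -> R) (a : R) :
  (forall x y, a <= x <= y -> Rabs (f y - f x) <= h y - h x) ->
  (forall x, a <= x -> h x <= 0) ->
  exists c, forall x, a <= x -> Rabs (f x - c) <= - h x.
Proof.
  intros Hf Hh.
  assert (Hlow : forall x y, a <= x <= y -> f x + h x <= f y + h y)
    by (intros x y Hxy; specialize (Hf x y Hxy); apply Rabs_le_between in Hf; lra).
  assert (Hup : forall x y, a <= x <= y -> f y - h y <= f x - h x)
    by (intros x y Hxy; specialize (Hf x y Hxy); apply Rabs_le_between in Hf; lra).
  set (E := fun z => exists x, a <= x /\ z = f x + h x).
  assert (Hlu : forall x y, a <= x -> a <= y -> f x + h x <= f y - h y).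
  { intros x y Hx Hy. destruct (Rle_dec x y).
    - specialize (Hlow x y ltac:(lra)). specialize (Hh y Hy). lra.
    - specialize (Hup y x ltac:(lra)). specialize (Hh x Hx). lra. }
  destruct (completeness E) as [c [Hc1 Hc2]].
  - exists (f a - h a). intros z [x [Hx ->]]. apply Hlu; lra.
  - exists (f a + h a), a. split; [lra | reflexivity].
  - exists c. intros x Hx.
    assert (f x + h x <= c) by (apply Hc1; now exists x).
    assert (c <= f x - h x) by (apply Hc2; intros z [y [Hy ->]]; now apply Hlu).
    apply Rabs_le. lra.
Qed.

Lemma le_of_abs_sub_le_div_sqr (f : R -> R) (l c K : R) : 0 <= K ->
  (forall x, 1 <= x -> l <= f x) -> (forall x, 1 <= x -> Rabs (f x - c) <= K / x ^ 2) ->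
  l <= c.
Proof.
  intros HK Hl Hf. destruct (Rle_lt_dec l c) as [Hlc | Hcl]; [exact Hlc | exfalso].
  set (x := 1 + K / (l - c)).
  assert (HKx : K < (l - c) * x) by (unfold x; field_simplify; lra).
  assert (Hx : 1 <= x).
  { unfold x. enough (0 <= K / (l - c)) by lra.
    apply Rmult_le_pos; [lra | apply Rlt_le, Rinv_0_lt_compat; lra]. }
  specialize (Hl x Hx). specialize (Hf x Hx). apply Rabs_le_between in Hf.
  assert (Hfx : (f x - c) * x ^ 2 <= K).
  { apply Rmult_le_reg_r with (/ x ^ 2); [apply Rinv_0_lt_compat; nra|].
    rewrite Rmult_assoc, Rinv_r, Rmult_1_r by nra. apply Hf. }
  nra.
Qed.

(* Sturm comparison: the Wronskian [p' q - p q'] is nondecreasing, hence [p / q] too. *)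
Lemma wronskian_comparison (p p1 p2 q q1 q2 : R -> R) :
  (forall x, is_derive p x (p1 x)) -> (forall x, is_derive p1 x (p2 x)) ->
  (forall x, is_derive q x (q1 x)) -> (forall x, is_derive q1 x (q2 x)) ->
  (forall x, 0 < q x) -> (forall x, 0 <= p2 x * q x - p x * q2 x) ->
  p 0 = q 0 -> p1 0 = q1 0 -> forall x, 0 <= x -> q x <= p x.
Proof.
  intros Dp Dp1 Dq Dq1 Hq Hw P0 P10 x Hx.
  set (w := fun t => p1 t * q t - p t * q1 t).
  assert (Hw0 : forall t, 0 <= t -> 0 <= w t).
  { intros t Ht. replace 0 with (w 0) by (unfold w; rewrite P0, P10; ring).
    apply (le_of_derive_nonneg w (fun t => p2 t * q t - p t * q2 t)); auto.
    intros s _. unfold w.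
    replace (p2 s * q s - p s * q2 s)
      with ((p2 s * q s + p1 s * q1 s) - (p1 s * q1 s + p s * q2 s)) by ring.
    apply (is_derive_minus (V := R_NormedModule)); now apply is_derive_mult_R. }
  assert (Hratio : p 0 / q 0 <= p x / q x).
  { apply (le_of_derive_nonneg (fun t => p t / q t) (fun t => w t / q t ^ 2)); auto.
    - intros t _. apply is_derive_div; auto. specialize (Hq t). lra.
    - intros t Ht. apply Rmult_le_pos; [apply Hw0; lra|].
      apply Rlt_le, Rinv_0_lt_compat, pow_lt, Hq. }
  rewrite P0, Rdiv_diag in Hratio by (specialize (Hq 0); lra).
  specialize (Hq x). apply Rmult_le_compat_r with (r := q x) in Hratio; [|lra].
  unfold Rdiv in Hratio. rewrite Rmult_assoc, Rinv_l in Hratio by lra. lra.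
Qed.

Lemma is_derive_Rpower (u : R -> R) (du b x : R) : 0 < u x -> is_derive u x du ->
  is_derive (fun t => Rpower (u t) b) x (b * Rpower (u x) (b - 1) * du).
Proof.
  intros Hu Du.
  assert (H : is_derive (fun y => Rpower y b) (u x) (b * Rpower (u x) (b - 1)))
    by now apply is_derive_Reals, derivable_pt_lim_power.
  replace (b * Rpower (u x) (b - 1) * du) with (scal du (b * Rpower (u x) (b - 1)))
    by (unfold scal; simpl; unfold mult; simpl; ring).
  now apply (is_derive_comp (fun y => Rpower y b) u).
Qed.

Lemma Rpower_1_l (b : R) : Rpower 1 b = 1.
Proof. unfold Rpower. rewrite ln_1, Rmult_0_r. apply exp_0. Qed.

Lemma Rpower_plus_pow (x b : R) (n : nat) : 0 < x -> Rpower x (b + INR n) = Rpower x b * x ^ n.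
Proof. intros Hx. now rewrite Rpower_plus, Rpower_pow. Qed.

Lemma Rpower_sqr (x b : R) : 0 < x -> Rpower (x ^ 2) b = Rpower x (2 * b).
Proof. intros Hx. rewrite <- (Rpower_pow 2 x Hx), Rpower_mult. now f_equal. Qed.

Lemma is_derive_Rpower_id (b x : R) : 0 < x ->
  is_derive (fun t => Rpower t b) x (b * Rpower x (b - 1)).
Proof.
  intros Hx. rewrite <- (Rmult_1_r (b * Rpower x (b - 1))).
  apply (is_derive_Rpower (fun t => t)); [exact Hx | apply (is_derive_id (K := R_AbsRing))].
Qed.

Lemma is_derive_1_plus_sqr (m x : R) : is_derive (fun t => 1 + m * t ^ 2) x (2 * m * x).
Proof. auto_derive; [trivial | ring]. Qed.

(** * The Picard series of [y'' = W y], [y 0 = 1], [y' 0 = 0] *)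

(* [cosh_term k n x] is the n-th term of the series of cosh (sqrt k * x), and
   [sinh_term k n x] that of its derivative sqrt k * sinh (sqrt k * x). *)
Definition cosh_term (k : R) (n : nat) (x : R) : R :=
  k ^ n * x ^ (2 * n) / INR (fact (2 * n)).

Definition sinh_term (k : R) (n : nat) (x : R) : R :=
  k ^ S n * x ^ S (2 * n) / INR (fact (S (2 * n))).

Lemma is_derive_monomial (a : R) (p : nat) (x l : R) :
  l = a * INR (S p) * x ^ p -> is_derive (fun t => a * t ^ S p) x l.
Proof. intros ->. auto_derive; [trivial | simpl; ring]. Qed.

Lemma is_derive_cosh_term (k : R) (n : nat) (x : R) :
  is_derive (cosh_term k (S n)) x (sinh_term k n x).
Proof.
  unfold cosh_term, sinh_term. replace (2 * S n)%nat with (S (S (2 * n))) by lia.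
  set (m := (2 * n)%nat).
  eapply is_derive_ext; [|apply (is_derive_monomial (k ^ S n / INR (fact (S (S m)))) (S m))].
  { intros t. simpl. unfold Rdiv. ring. }
  rewrite (fact_simpl (S m)), mult_INR.
  pose proof (INR_fact_lt_0 (S m)). pose proof (lt_0_INR (S (S m)) ltac:(lia)).
  field; split; apply Rgt_not_eq; lra.
Qed.

Lemma is_derive_sinh_term (k : R) (n : nat) (x : R) :
  is_derive (sinh_term k n) x (k * cosh_term k n x).
Proof.
  unfold cosh_term, sinh_term. set (m := (2 * n)%nat).
  eapply is_derive_ext; [|apply (is_derive_monomial (k ^ S n / INR (fact (S m))) m)].
  { intros t. simpl. unfold Rdiv. ring. }
  rewrite (fact_simpl m), mult_INR.
  pose proof (INR_fact_lt_0 m). pose proof (lt_0_INR (S m) ltac:(lia)).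
  rewrite <- tech_pow_Rmult. field; split; apply Rgt_not_eq; lra.
Qed.

Lemma cosh_term_S_0 (k : R) (n : nat) : cosh_term k (S n) 0 = 0.
Proof. unfold cosh_term. rewrite pow_i by lia. unfold Rdiv. ring. Qed.

Lemma sinh_term_0 (k : R) (n : nat) : sinh_term k n 0 = 0.
Proof. unfold sinh_term. rewrite pow_i by lia. unfold Rdiv. ring. Qed.

Definition exp_term (c r : R) (n : nat) : R := (c * r ^ 2) ^ n / INR (fact n).

Lemma exp_term_nonneg (c r : R) (n : nat) : 0 <= c -> 0 <= exp_term c r n.
Proof.
  intros Hc. apply Rmult_le_pos; [apply pow_le; nra|].
  apply Rlt_le, Rinv_0_lt_compat, INR_fact_lt_0.
Qed.

Lemma exp_term_cv (c r : R) : Un_cv (sum_f_R0 (exp_term c r)) (exp (c * r ^ 2)).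
Proof.
  unfold exp. destruct (exist_exp (c * r ^ 2)) as [l Hl]; simpl.
  eapply Un_cv_ext; [|exact Hl]. intros n. apply sum_eq. intros i _.
  unfold exp_term. apply Rmult_comm.
Qed.

Lemma ex_series_exp_term (c r : R) : ex_series (exp_term c r).
Proof. exists (exp (c * r ^ 2)). apply is_series_Reals, exp_term_cv. Qed.

Lemma le_exp_term (k r : R) (m p q : nat) : 0 <= k -> 1 <= r ->
  (p <= 2 * m)%nat -> (fact m <= fact q)%nat ->
  k ^ m * r ^ p / INR (fact q) <= exp_term k r m.
Proof.
  intros Hk Hr Hp Hq. unfold exp_term. rewrite Rpow_mult_distr, <- pow_mult.
  pose proof (INR_fact_lt_0 m).
  assert (INR (fact m) <= INR (fact q)) by now apply le_INR.
  assert (r ^ p <= r ^ (2 * m)) by (apply Rle_pow; auto).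
  assert (0 <= k ^ m) by (apply pow_le; auto).
  assert (0 <= r ^ p) by (apply pow_le; lra).
  apply Rmult_le_compat; [nra | apply Rlt_le, Rinv_0_lt_compat; lra | nra |].
  apply Rinv_le_contravar; auto.
Qed.

Lemma Series_zero : Series (fun _ => 0) = 0.
Proof.
  rewrite (Series_ext _ (fun _ => 0 * 0)) by (intros; ring).
  rewrite Series_scal_l. ring.
Qed.

Lemma is_derive_sum_f_R0 (a b : nat -> R -> R) :
  (forall n y, is_derive (a n) y (b n y)) ->
  forall n y, is_derive (fun x => sum_f_R0 (fun k => a k x) n) y (sum_f_R0 (fun k => b k y) n).
Proof.
  intros Hab n. induction n as [|n IH]; intros y; simpl; [apply Hab|].
  now apply (is_derive_plus (V := R_NormedModule)).
Qed.

Lemma is_derive_Series (c : R) (a b : nat -> R -> R) : 0 <= c ->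
  (forall n y, is_derive (a n) y (b n y)) ->
  (forall r n y, 1 <= r -> Rabs y < r -> Rabs (a n y) <= exp_term c r n) ->
  (forall r n y, 1 <= r -> Rabs y < r -> Rabs (b n y) <= exp_term c r n) ->
  (forall y, ex_series (fun n => a n y)) /\
  (forall x, is_derive (fun y => Series (fun n => a n y)) x (Series (fun n => b n x))).
Proof.
  intros Hc Hab Ha Hb.
  assert (Hex : forall y, ex_series (fun n => a n y)).
  { intros y. apply (ex_series_le (K := R_AbsRing) (V := R_CompleteNormedModule) _
                       (exp_term c (Rabs y + 1))); [|apply ex_series_exp_term].
    intros n. apply Ha; pose proof (Rabs_pos y); lra. }
  split; [exact Hex|]. intros x.
  assert (Hr : 0 < Rabs x + 1) by (pose proof (Rabs_pos x); lra).
  set (r := mkposreal _ Hr).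
  assert (Hcvn : CVN_r b r).
  { exists (exp_term c (Rabs x + 1)), (exp (c * (Rabs x + 1) ^ 2)). split.
    - eapply Un_cv_ext; [|apply exp_term_cv]. intros n. apply sum_eq. intros i _.
      symmetry. now apply Rabs_pos_eq, exp_term_nonneg.
    - intros n y Hy. unfold Boule in Hy. rewrite Rminus_0_r in Hy.
      apply Hb; simpl; [pose proof (Rabs_pos x); lra | exact Hy]. }
  destruct (CVN_CVU_r b r Hcvn x ltac:(simpl; lra)) as [e He].
  apply is_derive_Reals.
  apply (CVU_derivable (SP a) (SP b) _ _ x e He).
  - intros y _. apply is_lim_seq_Reals.
    eapply is_lim_seq_ext; [|apply (Series_correct _ (Hex y))].
    intros n. unfold SP. now rewrite <- sum_n_Reals.
  - intros n y _. apply is_derive_Reals. unfold SP. now apply is_derive_sum_f_R0.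
  - unfold Boule. rewrite Rminus_diag, Rabs_R0. apply cond_pos.
Qed.

Lemma abs_monomial_div_fact_le (k y r : R) (m p q : nat) : 0 <= k -> Rabs y <= r ->
  Rabs (k ^ m * y ^ p / INR (fact q)) <= k ^ m * r ^ p / INR (fact q).
Proof.
  intros Hk Hy. pose proof (INR_fact_lt_0 q).
  unfold Rdiv. rewrite !Rabs_mult, Rabs_inv, <- !RPow_abs.
  rewrite (Rabs_pos_eq k), (Rabs_pos_eq (INR _)) by lra.
  apply Rmult_le_compat_r; [apply Rlt_le, Rinv_0_lt_compat; lra|].
  apply Rmult_le_compat_l; [now apply pow_le|].
  apply pow_incr. split; [apply Rabs_pos | exact Hy].
Qed.

Definition prim (h : R -> R) (t : R) : R := RInt h 0 t.

Lemma is_derive_prim (h : R -> R) :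
  (forall x, continuous h x) -> forall t, is_derive (prim h) t (h t).
Proof.
  intros Hh t. apply (is_derive_RInt h (prim h) 0 t); [|apply Hh].
  apply filter_forall. intros b. apply (RInt_correct (V := R_CompleteNormedModule)).
  apply (ex_RInt_continuous (V := R_CompleteNormedModule)). intros; apply Hh.
Qed.

Lemma prim_0 (h : R -> R) : prim h 0 = 0.
Proof. unfold prim. now rewrite RInt_point. Qed.

Section Picard.

Variables (W : R -> R) (k : R).
Hypothesis W_continuous : forall x, continuous W x.
Hypothesis W_bounds : forall x, 0 <= W x <= k.

Fixpoint picard_term (n : nat) : R -> R :=
  match n with
  | O => fun _ => 1
  | S m => prim (prim (fun s => W s * picard_term m s))
  end.

Definition picard_term_d1 (n : nat) : R -> R :=
  match n with
  | O => fun _ => 0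
  | S m => prim (fun s => W s * picard_term m s)
  end.

Definition picard_term_d2 (n : nat) : R -> R :=
  match n with
  | O => fun _ => 0
  | S m => fun s => W s * picard_term m s
  end.

Lemma is_derive_picard_term (n : nat) :
  (forall x, is_derive (picard_term n) x (picard_term_d1 n x)) /\
  (forall x, is_derive (picard_term_d1 n) x (picard_term_d2 n x)).
Proof.
  induction n as [|n [D1 _]].
  - split; intros x; [apply (is_derive_const 1) | apply (is_derive_const 0)].
  - assert (C2 : forall x, continuous (picard_term_d2 (S n)) x).
    { intros x. apply (continuous_mult W (picard_term n)); [apply W_continuous|].
      now apply (continuous_of_is_derive _ _ D1). }
    assert (D2 : forall x, is_derive (picard_term_d1 (S n)) x (picard_term_d2 (S n) x))
      by apply (is_derive_prim _ C2).
    split; [|exact D2].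
    apply is_derive_prim, (continuous_of_is_derive _ _ D2).
Qed.

Lemma picard_term_S_0 (n : nat) : picard_term (S n) 0 = 0.
Proof. apply prim_0. Qed.

Lemma picard_term_d1_S_0 (n : nat) : picard_term_d1 (S n) 0 = 0.
Proof. apply prim_0. Qed.

Lemma picard_term_nonneg (n : nat) (x : R) : 0 <= picard_term n x.
Proof.
  revert x. induction n as [|n IH]; intros x; [simpl; lra|].
  destruct (is_derive_picard_term (S n)) as [D1 D2].
  refine (proj1 (nonneg_of_derive2_nonneg _ _ _ D1 D2 _
                   (picard_term_S_0 n) (picard_term_d1_S_0 n) x)).
  intros t. apply Rmult_le_pos; [apply W_bounds | apply IH].
Qed.

Lemma abs_picard_term_d2_le (n : nat) (x : R) :
  Rabs (picard_term n x) <= cosh_term k n x ->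
  Rabs (picard_term_d2 (S n) x) <= k * cosh_term k n x.
Proof.
  intros Hn. simpl. rewrite Rabs_mult, (Rabs_pos_eq (W x)) by apply W_bounds.
  apply Rmult_le_compat; [apply W_bounds | apply Rabs_pos | apply W_bounds | exact Hn].
Qed.

Lemma picard_term_dominated_step (n : nat) :
  (forall t, Rabs (picard_term n t) <= cosh_term k n t) ->
  forall x, Rabs (picard_term (S n) x) <= cosh_term k (S n) x /\
            Rabs (picard_term_d1 (S n) x) <= Rabs (sinh_term k n x).
Proof.
  intros Hn. destruct (is_derive_picard_term (S n)) as [D1 D2].
  apply (second_derive_domination _ _ _ _ _ _ D1 D2
           (is_derive_cosh_term k n) (is_derive_sinh_term k n));
    [| apply picard_term_S_0 | apply picard_term_d1_S_0 | |].
  - intros t. now apply abs_picard_term_d2_le.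
  - apply cosh_term_S_0.
  - apply sinh_term_0.
Qed.

Lemma abs_picard_term_le (n : nat) (x : R) : Rabs (picard_term n x) <= cosh_term k n x.
Proof.
  revert x. induction n as [|n IH]; intros x.
  - unfold cosh_term. simpl. rewrite Rabs_R1. lra.
  - exact (proj1 (picard_term_dominated_step n IH x)).
Qed.

Lemma abs_picard_term_d1_le (n : nat) (x : R) :
  Rabs (picard_term_d1 (S n) x) <= Rabs (sinh_term k n x).
Proof. exact (proj2 (picard_term_dominated_step n (abs_picard_term_le n) x)). Qed.

Let k_nonneg : 0 <= k.
Proof. destruct (W_bounds 0). lra. Qed.

Lemma picard_term_le_exp_term (r : R) (n : nat) (y : R) : 1 <= r -> Rabs y < r ->
  Rabs (picard_term n y) <= exp_term k r n /\
  Rabs (picard_term_d1 n y) <= exp_term k r n /\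
  Rabs (picard_term_d2 n y) <= exp_term k r n.
Proof.
  intros Hr Hy. pose proof k_nonneg as Hk.
  assert (Hcosh : forall m, cosh_term k m y <= k ^ m * r ^ (2 * m) / INR (fact (2 * m))).
  { intros m. eapply Rle_trans; [apply Rle_abs|].
    apply abs_monomial_div_fact_le; auto. lra. }
  split; [|split].
  - eapply Rle_trans; [apply abs_picard_term_le|]. eapply Rle_trans; [apply Hcosh|].
    apply le_exp_term; [exact Hk | exact Hr | lia | apply fact_le; lia].
  - destruct n as [|n]; [simpl; rewrite Rabs_R0; now apply exp_term_nonneg|].
    eapply Rle_trans; [apply abs_picard_term_d1_le|]. unfold sinh_term.
    eapply Rle_trans; [apply abs_monomial_div_fact_le with (r := r); auto; lra|].
    apply le_exp_term; [exact Hk | exact Hr | lia | apply fact_le; lia].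
  - destruct n as [|n]; [simpl; rewrite Rabs_R0; now apply exp_term_nonneg|].
    eapply Rle_trans; [apply abs_picard_term_d2_le, abs_picard_term_le|].
    eapply Rle_trans; [apply Rmult_le_compat_l; [exact Hk | apply Hcosh]|].
    replace (k * (k ^ n * r ^ (2 * n) / INR (fact (2 * n))))
      with (k ^ S n * r ^ (2 * n) / INR (fact (2 * n))) by (simpl; unfold Rdiv; ring).
    apply le_exp_term; [exact Hk | exact Hr | lia |].
    destruct n as [|n]; [simpl; lia | apply fact_le; lia].
Qed.

Lemma picard_term_series :
  (forall y, ex_series (fun n => picard_term n y)) /\
  (forall x, is_derive (fun y => Series (fun n => picard_term n y)) x
                       (Series (fun n => picard_term_d1 n x))) /\
  (forall x, is_derive (fun y => Series (fun n => picard_term_d1 n y)) x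
                       (Series (fun n => picard_term_d2 n x))).
Proof.
  destruct (is_derive_Series k picard_term picard_term_d1 k_nonneg) as [Hex D0].
  1: intros n; apply is_derive_picard_term.
  1, 2: intros r n y Hr Hy; apply (picard_term_le_exp_term r n y Hr Hy).
  destruct (is_derive_Series k picard_term_d1 picard_term_d2 k_nonneg) as [_ D1].
  1: intros n; apply is_derive_picard_term.
  1, 2: intros r n y Hr Hy; apply (picard_term_le_exp_term r n y Hr Hy).
  auto.
Qed.

Lemma ex_series_picard_term (y : R) : ex_series (fun n => picard_term n y).
Proof. exact (proj1 picard_term_series y). Qed.

Definition picard_sol (x : R) : R := Series (fun n => picard_term n x).
Definition picard_sol_d1 (x : R) : R := Series (fun n => picard_term_d1 n x).

Lemma is_derive_picard_sol (x : R) : is_derive picard_sol x (picard_sol_d1 x).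
Proof. exact (proj1 (proj2 picard_term_series) x). Qed.

Lemma is_derive_picard_sol_d1 (x : R) :
  is_derive picard_sol_d1 x (W x * picard_sol x).
Proof.
  replace (W x * picard_sol x) with (Series (fun n => picard_term_d2 n x)).
  - exact (proj2 (proj2 picard_term_series) x).
  - rewrite Series_incr_1_aux by reflexivity. apply Series_scal_l.
Qed.

Lemma picard_sol_0 : picard_sol 0 = 1.
Proof.
  unfold picard_sol. rewrite Series_incr_1 by apply ex_series_picard_term.
  rewrite (Series_ext _ (fun _ => 0)), Series_zero by (intros n; apply picard_term_S_0).
  simpl. ring.
Qed.

Lemma picard_sol_d1_0 : picard_sol_d1 0 = 0.
Proof.
  unfold picard_sol_d1. rewrite (Series_ext _ (fun _ => 0)); [apply Series_zero|].
  intros [|n]; [reflexivity | apply picard_term_d1_S_0].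
Qed.

Lemma picard_sol_ge_1 (x : R) : 1 <= picard_sol x.
Proof.
  unfold picard_sol. rewrite Series_incr_1 by apply ex_series_picard_term.
  simpl picard_term at 1.
  enough (Series (fun _ => 0) <= Series (fun n => picard_term (S n) x))
    by (rewrite Series_zero in *; lra).
  apply Series_le; [intros n; split; [lra | apply picard_term_nonneg]|].
  apply (ex_series_incr_1 (fun n => picard_term n x)), ex_series_picard_term.
Qed.

End Picard.

(** * Smoothness *)

(* All orders up to [n] are required: [ex_derive_n f (S n) x] alone says nothing about lower
   orders, as [Derive_n f n] is a junk value where [f] is not [n] times differentiable. *)
Definition ex_derive_upto (n : nat) (f : R -> R) : Prop :=
  forall j x, (j <= n)%nat -> ex_derive_n f j x.

Lemma Derive_n_S (f : R -> R) (i : nat) (x : R) :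
  Derive_n f (S i) x = Derive_n (Derive f) i x.
Proof.
  change (Derive_n f (S i) x = Derive_n (Derive_n f 1) i x).
  now rewrite Derive_n_comp, Nat.add_1_r.
Qed.

Lemma ex_derive_n_SS (f : R -> R) (i : nat) (x : R) :
  ex_derive_n f (S (S i)) x <-> ex_derive_n (Derive f) (S i) x.
Proof.
  change (ex_derive (Derive_n f (S i)) x <-> ex_derive (Derive_n (Derive f) i) x).
  split; apply ex_derive_ext; intros t; now rewrite Derive_n_S.
Qed.

Lemma ex_derive_upto_0 (f : R -> R) : ex_derive_upto 0 f.
Proof. intros j x Hj. now replace j with 0%nat by lia. Qed.

Lemma ex_derive_upto_S (f : R -> R) (n : nat) : (forall x, ex_derive f x) ->
  ex_derive_upto n (Derive f) -> ex_derive_upto (S n) f.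
Proof.
  intros Hf Hn [|[|i]] x Hj; [exact I | apply Hf |].
  apply (proj2 (ex_derive_n_SS f i x)), Hn. lia.
Qed.

Lemma ex_derive_upto_Derive (f : R -> R) (n : nat) :
  ex_derive_upto (S n) f -> ex_derive_upto n (Derive f).
Proof.
  intros Hf [|i] x Hj; [exact I|].
  apply (proj1 (ex_derive_n_SS f i x)), Hf. lia.
Qed.

Lemma ex_derive_upto_S_le (f : R -> R) (n : nat) :
  ex_derive_upto (S n) f -> ex_derive_upto n f.
Proof. intros Hf j x Hj. apply Hf. lia. Qed.

Lemma ex_derive_of_upto (f : R -> R) (n : nat) (x : R) :
  ex_derive_upto (S n) f -> ex_derive f x.
Proof. intros Hf. exact (Hf 1%nat x ltac:(lia)). Qed.

Lemma ex_derive_upto_ext (f g : R -> R) (n : nat) :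
  (forall t, f t = g t) -> ex_derive_upto n f -> ex_derive_upto n g.
Proof. intros Hfg Hf j x Hj. eapply ex_derive_n_ext; [exact Hfg | now apply Hf]. Qed.

Lemma ex_derive_upto_plus (f g : R -> R) (n : nat) :
  ex_derive_upto n f -> ex_derive_upto n g -> ex_derive_upto n (fun t => f t + g t).
Proof.
  intros Hf Hg j x Hj. apply ex_derive_n_plus; apply filter_forall;
    intros y i Hi; [apply Hf | apply Hg]; lia.
Qed.

Lemma ex_derive_upto_scal (c : R) (f : R -> R) (n : nat) :
  ex_derive_upto n f -> ex_derive_upto n (fun t => c * f t).
Proof. intros Hf j x Hj. now apply ex_derive_n_scal_l, Hf. Qed.

Lemma ex_derive_upto_id (n : nat) : ex_derive_upto n (fun t => t).
Proof.
  destruct n as [|n]; [apply ex_derive_upto_0|].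
  apply ex_derive_upto_S; [intros; apply ex_derive_id|].
  apply (ex_derive_upto_ext (fun _ => 1)); [intros t; symmetry; apply Derive_id|].
  intros j x _. apply ex_derive_n_const.
Qed.

Lemma ex_derive_upto_mult (n : nat) (f g : R -> R) :
  ex_derive_upto n f -> ex_derive_upto n g -> ex_derive_upto n (fun t => f t * g t).
Proof.
  revert f g. induction n as [|n IH]; intros f g Hf Hg; [apply ex_derive_upto_0|].
  apply ex_derive_upto_S.
  - intros x. apply ex_derive_mult; eapply ex_derive_of_upto; eauto.
  - apply (ex_derive_upto_ext (fun t => Derive f t * g t + f t * Derive g t)).
    { intros t. symmetry. apply Derive_mult; eapply ex_derive_of_upto; eauto. }
    apply ex_derive_upto_plus; apply IH;
      auto using ex_derive_upto_Derive, ex_derive_upto_S_le.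
Qed.

Lemma ex_derive_upto_inv_1_plus_sqr (n : nat) : ex_derive_upto n (fun t => / (1 + t ^ 2)).
Proof.
  induction n as [|n IH]; [apply ex_derive_upto_0|].
  apply ex_derive_upto_S.
  - intros x. auto_derive. nra.
  - apply (ex_derive_upto_ext (fun t => -2 * (t * / (1 + t ^ 2) * / (1 + t ^ 2)))).
    { intros t. symmetry. apply is_derive_unique. auto_derive; [nra | field; nra]. }
    apply ex_derive_upto_scal, ex_derive_upto_mult; [apply ex_derive_upto_mult|]; auto.
    apply ex_derive_upto_id.
Qed.

Lemma ex_derive_upto_second_order (W p p1 : R -> R) :
  (forall n, ex_derive_upto n W) ->
  (forall x, is_derive p x (p1 x)) -> (forall x, is_derive p1 x (W x * p x)) ->
  forall n, ex_derive_upto n p.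
Proof.
  intros HW Dp Dp1.
  assert (Hstep : forall n, ex_derive_upto n p -> ex_derive_upto (S n) p).
  { intros n Hn. apply ex_derive_upto_S; [intros x; eexists; apply Dp|].
    apply (ex_derive_upto_ext p1); [intros t; symmetry; apply is_derive_unique, Dp|].
    destruct n as [|m]; [apply ex_derive_upto_0|].
    apply ex_derive_upto_S; [intros x; eexists; apply Dp1|].
    apply (ex_derive_upto_ext (fun t => W t * p t));
      [intros t; symmetry; apply is_derive_unique, Dp1|].
    apply ex_derive_upto_mult; [apply HW | now apply ex_derive_upto_S_le]. }
  intros n. induction n as [|n IH]; [apply ex_derive_upto_0 | now apply Hstep].
Qed.

(** * Uniqueness *)

(* Gronwall: E exp(-c t) is nonincreasing and E exp(c t) nondecreasing. *)
Lemma eq_0_of_abs_derive_le (E E1 : R -> R) (c : R) :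
  (forall x, is_derive E x (E1 x)) -> (forall x, Rabs (E1 x) <= c * E x) ->
  (forall x, 0 <= E x) -> E 0 = 0 -> forall x, E x = 0.
Proof.
  intros DE HE Epos E0 x.
  assert (HE1 : forall t, - (c * E t) <= E1 t <= c * E t)
    by (intros t; apply Rabs_le_between, HE).
  assert (D : forall a t, is_derive (fun s => E s * exp (a * s)) t
                            (E1 t * exp (a * t) + E t * (a * exp (a * t)))).
  { intros a t. apply (is_derive_mult_R E (fun s => exp (a * s))); [apply DE|].
    auto_derive; [trivial | ring]. }
  pose proof (Epos x). pose proof (exp_pos (c * x)). pose proof (exp_pos (- c * x)).
  destruct (Rle_lt_dec 0 x) as [Hx | Hx].
  - enough (E x * exp (- c * x) <= E 0 * exp (- c * 0)) by (rewrite E0 in *; nra).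
    apply (ge_of_derive_nonpos _ _ 0 x Hx (fun t _ => D (- c) t)).
    intros t _. pose proof (exp_pos (- c * t)). specialize (HE1 t). nra.
  - enough (E x * exp (c * x) <= E 0 * exp (c * 0)) by (rewrite E0 in *; nra).
    apply (le_of_derive_nonneg _ _ x 0 ltac:(lra) (fun t _ => D c t)).
    intros t _. pose proof (exp_pos (c * t)). specialize (HE1 t). nra.
Qed.

Lemma second_order_unique (W : R -> R) (k : R) (p p1 q q1 : R -> R) :
  (forall x, Rabs (W x) <= k) ->
  (forall x, is_derive p x (p1 x)) -> (forall x, is_derive p1 x (W x * p x)) ->
  (forall x, is_derive q x (q1 x)) -> (forall x, is_derive q1 x (W x * q x)) ->
  p 0 = q 0 -> p1 0 = q1 0 -> forall x, p x = q x.
Proof.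
  intros HW Dp Dp1 Dq Dq1 H0 H10 x.
  set (d := fun t => p t - q t). set (d1 := fun t => p1 t - q1 t).
  assert (Dd : forall t, is_derive d t (d1 t))
    by (intros t; now apply (is_derive_minus (V := R_NormedModule))).
  assert (Dd1 : forall t, is_derive d1 t (W t * d t)).
  { intros t. unfold d. rewrite Rmult_minus_distr_l.
    now apply (is_derive_minus (V := R_NormedModule)). }
  assert (HE : forall t, d t * d t + d1 t * d1 t = 0).
  { apply (eq_0_of_abs_derive_le _ (fun t => 2 * d t * d1 t * (1 + W t)) (1 + k)).
    - intros t.
      replace (2 * d t * d1 t * (1 + W t))
        with ((d1 t * d t + d t * d1 t) + (W t * d t * d1 t + d1 t * (W t * d t))) by ring.
      apply (is_derive_plus (V := R_NormedModule)); apply is_derive_mult_R; auto.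
    - intros t. rewrite Rabs_mult, (Rmult_comm (1 + k)).
      assert (Hdd : Rabs (2 * d t * d1 t) <= d t * d t + d1 t * d1 t)
        by (pose proof (Rle_0_sqr (d t - d1 t)); pose proof (Rle_0_sqr (d t + d1 t));
            unfold Rsqr in *; apply Rabs_le; split; nra).
      assert (HW1 : Rabs (1 + W t) <= 1 + k).
      { eapply Rle_trans; [apply Rabs_triang|]. rewrite Rabs_R1. specialize (HW t). lra. }
      apply Rmult_le_compat; auto using Rabs_pos.
    - intros t. nra.
    - unfold d, d1. rewrite H0, H10. ring. }
  specialize (HE x). unfold d in HE. nra.
Qed.

(** * The solution [psi] *)

Lemma Wt_opp (g x : R) : Wt g (- x) = Wt g x.
Proof. unfold Wt. f_equal. f_equal. ring. Qed.

Lemma Wt_bounds (g x : R) : 0 < g -> 0 <= Wt g x <= g * (g + 1).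
Proof.
  intros Hg. unfold Wt. assert (1 <= 1 + x ^ 2) by nra. split.
  - apply Rmult_le_pos; [nra | apply Rlt_le, Rinv_0_lt_compat; lra].
  - apply Rmult_le_reg_r with (1 + x ^ 2); [lra|].
    unfold Rdiv. rewrite Rmult_assoc, Rinv_l by lra. nra.
Qed.

Lemma ex_derive_upto_Wt (g : R) (n : nat) : ex_derive_upto n (Wt g).
Proof.
  apply (ex_derive_upto_ext (fun t => g * (g + 1) * / (1 + t ^ 2))).
  - intros t. reflexivity.
  - apply ex_derive_upto_scal, ex_derive_upto_inv_1_plus_sqr.
Qed.

Lemma Wt_continuous (g x : R) : continuous (Wt g) x.
Proof.
  apply (ex_derive_continuous (V := R_NormedModule)).
  exact (ex_derive_upto_Wt g 1%nat 1%nat x (le_n 1)). 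
Qed.

Section Psi.

Variable g : R.
Hypothesis g_gt_half : 1 / 2 < g.

Let Wt_bounds_g (x : R) : 0 <= Wt g x <= g * (g + 1).
Proof. apply Wt_bounds. lra. Qed.

Definition psi : R -> R := picard_sol (Wt g).
Definition psi1 : R -> R := picard_sol_d1 (Wt g).

Lemma is_derive_psi (x : R) : is_derive psi x (psi1 x).
Proof. exact (is_derive_picard_sol _ _ (Wt_continuous g) Wt_bounds_g x). Qed.

Lemma is_derive_psi1 (x : R) : is_derive psi1 x (Wt g x * psi x).
Proof. exact (is_derive_picard_sol_d1 _ _ (Wt_continuous g) Wt_bounds_g x). Qed.

Lemma psi_0 : psi 0 = 1.
Proof. exact (picard_sol_0 _ _ (Wt_continuous g) Wt_bounds_g). Qed.

Lemma psi1_0 : psi1 0 = 0.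
Proof. exact (picard_sol_d1_0 (Wt g)). Qed.

Lemma psi_ge_1 (x : R) : 1 <= psi x.
Proof. exact (picard_sol_ge_1 _ _ (Wt_continuous g) Wt_bounds_g x). Qed.

Lemma smooth_psi : smooth psi.
Proof.
  intros n x.
  apply (ex_derive_upto_second_order (Wt g) psi psi1 (ex_derive_upto_Wt g)
           is_derive_psi is_derive_psi1 n n x (le_n n)).
Qed.

Lemma Derive_psi (x : R) : Derive psi x = psi1 x.
Proof. apply is_derive_unique, is_derive_psi. Qed.

Lemma cauchy_sol_psi : cauchy_sol g psi.
Proof.
  split; [|split; [exact psi_0 | rewrite Derive_psi; exact psi1_0]].
  intros v. unfold L0.
  change (Derive_n psi 2 v) with (Derive (Derive psi) v).
  rewrite (Derive_ext _ psi1 v Derive_psi), (is_derive_unique _ _ _ (is_derive_psi1 v)).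
  ring.
Qed.

Let Wt_abs_le (x : R) : Rabs (Wt g x) <= g * (g + 1).
Proof. rewrite Rabs_pos_eq; apply Wt_bounds_g. Qed.

Lemma cauchy_sol_unique (phi : R -> R) :
  smooth phi -> cauchy_sol g phi -> forall v, phi v = psi v.
Proof.
  intros Hsmooth [Hode [H0 H10]].
  assert (DD : forall x, Derive (Derive phi) x = Wt g x * phi x).
  { intros x. specialize (Hode x). unfold L0 in Hode.
    change (Derive_n phi 2 x) with (Derive (Derive phi) x) in Hode. lra. }
  apply (second_order_unique (Wt g) (g * (g + 1)) phi (Derive phi) psi psi1 Wt_abs_le).
  - intros x. apply Derive_correct, (Hsmooth 1%nat).
  - intros x. rewrite <- DD. apply Derive_correct, (Hsmooth 2%nat).
  - apply is_derive_psi.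
  - apply is_derive_psi1.
  - now rewrite H0, psi_0.
  - now rewrite H10, psi1_0.
Qed.

Lemma psi_opp (v : R) : psi (- v) = psi v.
Proof.
  apply (second_order_unique (Wt g) (g * (g + 1)) (fun x => psi (- x)) (fun x => - psi1 (- x))
           psi psi1 Wt_abs_le); [| | apply is_derive_psi | apply is_derive_psi1 | |].
  - intros x. apply (is_derive_comp_opp psi), is_derive_psi.
  - intros x. rewrite <- Wt_opp, <- (Ropp_involutive (Wt g (- x) * psi (- x))).
    apply (is_derive_comp_opp (fun y => - psi1 y)).
    apply (is_derive_opp (V := R_NormedModule) psi1), is_derive_psi1.
  - now rewrite Ropp_0.
  - now rewrite Ropp_0, psi1_0, Ropp_0.
Qed.

Lemma psi_abs (v : R) : psi (Rabs v) = psi v.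
Proof.
  destruct (Rle_dec 0 v).
  - now rewrite Rabs_pos_eq.
  - rewrite Rabs_left by lra. apply psi_opp.
Qed.

(** * Asymptotics *)

(* Comparison functions: [zeta m'' <= Wt g * zeta m] for [m = (2 g - 1) / g], which is
   positive only because [1 / 2 < g], and [zeta g'' >= Wt g * zeta g]. *)
Definition zeta (m x : R) : R := Rpower (1 + m * x ^ 2) ((g + 1) / 2).

Definition zeta1 (m x : R) : R :=
  (g + 1) / 2 * Rpower (1 + m * x ^ 2) ((g + 1) / 2 - 1) * (2 * m * x).

Definition zeta2 (m x : R) : R :=
  (g + 1) / 2 * (((g + 1) / 2 - 1) * Rpower (1 + m * x ^ 2) ((g + 1) / 2 - 2) * (2 * m * x))
    * (2 * m * x)
  + (g + 1) / 2 * Rpower (1 + m * x ^ 2) ((g + 1) / 2 - 1) * (2 * m).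

Lemma is_derive_zeta (m x : R) : 0 <= m -> is_derive (zeta m) x (zeta1 m x).
Proof.
  intros Hm. apply (is_derive_Rpower (fun t => 1 + m * t ^ 2)); [nra | apply is_derive_1_plus_sqr].
Qed.

Lemma is_derive_zeta1 (m x : R) : 0 <= m -> is_derive (zeta1 m) x (zeta2 m x).
Proof.
  intros Hm. unfold zeta1, zeta2. set (a := (g + 1) / 2).
  replace (a - 2) with (a - 1 - 1) by ring.
  apply (is_derive_mult_R (fun t => a * Rpower (1 + m * t ^ 2) (a - 1)) (fun t => 2 * m * t));
    [|auto_derive; [trivial | ring]].
  apply (is_derive_scal (fun t => Rpower (1 + m * t ^ 2) (a - 1))).
  apply (is_derive_Rpower (fun t => 1 + m * t ^ 2)); [nra | apply is_derive_1_plus_sqr].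
Qed.

Lemma zeta_0 (m : R) : zeta m 0 = 1.
Proof.
  unfold zeta. rewrite pow_i, Rmult_0_r, Rplus_0_r by lia. apply Rpower_1_l.
Qed.

Lemma zeta1_0 (m : R) : zeta1 m 0 = 0.
Proof. unfold zeta1. ring. Qed.

Lemma zeta_defect (m x : R) : 0 <= m ->
  Wt g x * zeta m x - zeta2 m x =
  Rpower (1 + m * x ^ 2) ((g + 1) / 2 - 2) * (g + 1) *
  ((g - m) + m * x ^ 2 * (2 * g - 1 - g * m)) / (1 + x ^ 2).
Proof.
  intros Hm. assert (HX : 0 < 1 + m * x ^ 2) by nra.
  unfold zeta, zeta2, Wt. set (X := 1 + m * x ^ 2) in *. set (a := (g + 1) / 2).
  replace a with (a - 2 + 1 + 1) at 1 by ring. replace (a - 1) with (a - 2 + 1) by ring.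
  rewrite !Rpower_plus, !Rpower_1 by exact HX.
  unfold X, a. field. nra.
Qed.

Lemma zeta_defect_nonneg (t : R) :
  0 <= Wt g t * zeta ((2 * g - 1) / g) t - zeta2 ((2 * g - 1) / g) t.
Proof.
  set (m := (2 * g - 1) / g). assert (Hm : 0 < m) by (apply Rdiv_lt_0_compat; lra).
  rewrite zeta_defect by lra.
  replace (g - m + m * t ^ 2 * (2 * g - 1 - g * m)) with ((g - 1) ^ 2 / g)
    by (unfold m; field; nra).
  unfold Rdiv. apply Rmult_le_pos; [|apply Rlt_le, Rinv_0_lt_compat; nra].
  apply Rmult_le_pos; [apply Rmult_le_pos; [apply Rlt_le, exp_pos | lra]|].
  apply Rmult_le_pos; [apply pow2_ge_0 | apply Rlt_le, Rinv_0_lt_compat; lra].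
Qed.

Lemma zeta_defect_nonpos (t : R) : Wt g t * zeta g t - zeta2 g t <= 0.
Proof.
  rewrite zeta_defect by lra.
  replace (g - g + g * t ^ 2 * (2 * g - 1 - g * g)) with (- (g * (g - 1) ^ 2 * t ^ 2)) by ring.
  set (P := Rpower (1 + g * t ^ 2) ((g + 1) / 2 - 2)). set (A := g * (g - 1) ^ 2 * t ^ 2).
  assert (0 < P) by apply exp_pos.
  assert (0 < / (1 + t ^ 2)) by (apply Rinv_0_lt_compat; nra).
  assert (0 <= A) by (unfold A; pose proof (pow2_ge_0 (g - 1)); pose proof (pow2_ge_0 t);
                      apply Rmult_le_pos; [apply Rmult_le_pos|]; lra).
  assert (0 <= P * (g + 1) * A * / (1 + t ^ 2))
    by (apply Rmult_le_pos; [apply Rmult_le_pos; [apply Rmult_le_pos|]|]; lra).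
  unfold Rdiv.
  replace (P * (g + 1) * - A * / (1 + t ^ 2)) with (- (P * (g + 1) * A * / (1 + t ^ 2))) by ring.
  lra.
Qed.

Lemma zeta_le_psi (x : R) : 0 <= x -> zeta ((2 * g - 1) / g) x <= psi x.
Proof.
  set (m := (2 * g - 1) / g). assert (Hm : 0 <= m) by (apply Rlt_le, Rdiv_lt_0_compat; lra).
  apply (wronskian_comparison psi psi1 (fun t => Wt g t * psi t) (zeta m) (zeta1 m) (zeta2 m));
    auto using is_derive_psi, is_derive_psi1, is_derive_zeta, is_derive_zeta1.
  - intros t. apply exp_pos.
  - intros t.
    replace (Wt g t * psi t * zeta m t - psi t * zeta2 m t)
      with (psi t * (Wt g t * zeta m t - zeta2 m t)) by ring.
    pose proof (psi_ge_1 t). pose proof (zeta_defect_nonneg t) as Hd. fold m in Hd. nra.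
  - now rewrite psi_0, zeta_0.
  - now rewrite psi1_0, zeta1_0.
Qed.

Lemma psi_le_zeta (x : R) : 0 <= x -> psi x <= zeta g x.
Proof.
  assert (0 <= g) by lra.
  apply (wronskian_comparison (zeta g) (zeta1 g) (zeta2 g) psi psi1 (fun t => Wt g t * psi t));
    auto using is_derive_psi, is_derive_psi1, is_derive_zeta, is_derive_zeta1.
  - intros t. pose proof (psi_ge_1 t). lra.
  - intros t.
    replace (zeta2 g t * psi t - zeta g t * (Wt g t * psi t))
      with (- psi t * (Wt g t * zeta g t - zeta2 g t)) by ring.
    pose proof (psi_ge_1 t). pose proof (zeta_defect_nonpos t). nra.
  - now rewrite psi_0, zeta_0.
  - now rewrite psi1_0, zeta1_0.
Qed.

Lemma Rpower_g_plus_1 (x : R) : 0 < x -> Rpower x (g + 1) = Rpower (x ^ 2) ((g + 1) / 2).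
Proof. intros Hx. rewrite Rpower_sqr by exact Hx. f_equal. field. Qed.

Lemma power_le_psi (x : R) : 1 <= x ->
  Rpower ((2 * g - 1) / g) ((g + 1) / 2) * Rpower x (g + 1) <= psi x.
Proof.
  intros Hx. set (m := (2 * g - 1) / g). assert (Hm : 0 < m) by (apply Rdiv_lt_0_compat; lra).
  rewrite Rpower_g_plus_1, Rpower_mult_distr by (try apply pow_lt; lra).
  eapply Rle_trans; [|apply zeta_le_psi; lra].
  apply Rle_Rpower_l; [lra|].
  split; [apply Rmult_lt_0_compat; [exact Hm | apply pow_lt; lra] | unfold m; lra].
Qed.

Lemma psi_le_power (x : R) : 1 <= x ->
  psi x <= Rpower (1 + g) ((g + 1) / 2) * Rpower x (g + 1).
Proof.
  intros Hx. rewrite Rpower_g_plus_1, Rpower_mult_distr by (try apply pow_lt; lra).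
  eapply Rle_trans; [apply psi_le_zeta; lra|].
  apply Rle_Rpower_l; [lra|]. split; nra.
Qed.

(* The Wronskian of [psi] and [x ^ (g + 1)], the latter solving [y'' = g (g + 1) y / x ^ 2]. *)
Definition wr (x : R) : R := psi1 x * Rpower x (g + 1) - (g + 1) * Rpower x g * psi x.

Lemma is_derive_wr (x : R) : 0 < x ->
  is_derive wr x (- (g * (g + 1)) * psi x * Rpower x (g - 1) / (1 + x ^ 2)).
Proof.
  intros Hx.
  assert (D := is_derive_minus (V := R_NormedModule) _ _ x _ _
     (is_derive_mult_R psi1 (fun t => Rpower t (g + 1)) x _ _
        (is_derive_psi1 x) (is_derive_Rpower_id (g + 1) x Hx))
     (is_derive_mult_R (fun t => (g + 1) * Rpower t g) psi x _ _
        (is_derive_scal (fun t => Rpower t g) x (g + 1) _ (is_derive_Rpower_id g x Hx))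
        (is_derive_psi x))).
  assert (E1 : Rpower x (g + 1) = Rpower x (g - 1) * x ^ 2)
    by (rewrite <- Rpower_plus_pow by exact Hx; f_equal; simpl; ring).
  assert (E2 : Rpower x g = Rpower x (g - 1) * x ^ 1)
    by (rewrite <- Rpower_plus_pow by exact Hx; f_equal; simpl; ring).
  replace (- (g * (g + 1)) * psi x * Rpower x (g - 1) / (1 + x ^ 2))
    with (Wt g x * psi x * Rpower x (g + 1) + psi1 x * ((g + 1) * Rpower x (g + 1 - 1))
          - ((g + 1) * (g * Rpower x (g - 1)) * psi x + (g + 1) * Rpower x g * psi1 x));
    [exact D|].
  replace (g + 1 - 1) with g by ring. rewrite E1, E2. unfold Wt. field. nra.
Qed.

Lemma abs_derive_wr_le (t : R) : 1 <= t ->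
  Rabs (- (g * (g + 1)) * psi t * Rpower t (g - 1) / (1 + t ^ 2))
  <= g * (g + 1) * Rpower (1 + g) ((g + 1) / 2) * (Rpower t (g - 1) * Rpower t (g - 1)).
Proof.
  intros Ht. assert (Ht0 : 0 < t) by lra. assert (H1t : 0 < 1 + t ^ 2) by nra.
  set (Cu := Rpower (1 + g) ((g + 1) / 2)). assert (HCu : 0 < Cu) by apply exp_pos.
  set (P := Rpower t (g - 1)). assert (HP : 0 < P) by apply exp_pos.
  assert (Hpsi : psi t <= Cu * (P * t ^ 2)).
  { unfold P. rewrite <- Rpower_plus_pow with (n := 2%nat) by exact Ht0.
    replace (g - 1 + INR 2) with (g + 1) by (simpl; ring). apply psi_le_power, Ht. }
  pose proof (psi_ge_1 t).
  replace (- (g * (g + 1)) * psi t * P / (1 + t ^ 2))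
    with (- (g * (g + 1) * (psi t * P / (1 + t ^ 2)))) by (unfold Rdiv; ring).
  assert (0 <= psi t * P / (1 + t ^ 2))
    by (apply Rmult_le_pos; [nra | apply Rlt_le, Rinv_0_lt_compat, H1t]).
  rewrite Rabs_Ropp, Rabs_pos_eq by (apply Rmult_le_pos; nra).
  rewrite (Rmult_assoc (g * (g + 1)) Cu). apply Rmult_le_compat_l; [nra|].
  apply Rmult_le_reg_r with (1 + t ^ 2); [exact H1t|].
  unfold Rdiv. rewrite Rmult_assoc, Rinv_l, Rmult_1_r by lra.
  assert (psi t * P <= Cu * (P * t ^ 2) * P) by (apply Rmult_le_compat_r; lra).
  assert (0 <= Cu * (P * P)) by (apply Rmult_le_pos; nra).
  nra.
Qed.

Lemma abs_wr_le : exists K, forall x, 1 <= x -> Rabs (wr x) <= K * Rpower x (2 * g - 1).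
Proof.
  set (c1 := g * (g + 1) * Rpower (1 + g) ((g + 1) / 2) / (2 * g - 1)).
  assert (Hc1 : 0 <= c1).
  { apply Rlt_le, Rdiv_lt_0_compat; [|lra].
    apply Rmult_lt_0_compat; [nra | apply exp_pos]. }
  exists (Rabs (wr 1) + c1). intros x Hx.
  assert (HX : 1 <= Rpower x (2 * g - 1))
    by (rewrite <- (Rpower_O x) at 1 by lra; apply Rle_Rpower; lra).
  enough (H : Rabs (wr x - wr 1) <= c1 * Rpower x (2 * g - 1) - c1 * Rpower 1 (2 * g - 1)).
  { rewrite Rpower_1_l in H. pose proof (Rabs_triang_inv (wr x) (wr 1)).
    pose proof (Rabs_pos (wr 1)). nra. }
  apply (abs_sub_le_of_abs_derive_le wr
           (fun t => - (g * (g + 1)) * psi t * Rpower t (g - 1) / (1 + t ^ 2))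
           (fun t => c1 * Rpower t (2 * g - 1))
           (fun t => c1 * ((2 * g - 1) * Rpower t (2 * g - 1 - 1))) 1 x Hx).
  - intros t Ht. apply is_derive_wr. lra.
  - intros t Ht. apply (is_derive_scal (fun s => Rpower s (2 * g - 1))), is_derive_Rpower_id. lra.
  - intros t [Ht _]. replace (2 * g - 1 - 1) with ((g - 1) + (g - 1)) by ring.
    rewrite Rpower_plus. unfold c1.
    replace (g * (g + 1) * Rpower (1 + g) ((g + 1) / 2) / (2 * g - 1) *
             ((2 * g - 1) * (Rpower t (g - 1) * Rpower t (g - 1))))
      with (g * (g + 1) * Rpower (1 + g) ((g + 1) / 2) * (Rpower t (g - 1) * Rpower t (g - 1)))
      by (field; lra).
    apply abs_derive_wr_le, Ht.
Qed.

Definition ratio (x : R) : R := psi x / Rpower x (g + 1).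

Lemma is_derive_ratio (x : R) : 0 < x ->
  is_derive ratio x (wr x / Rpower x (g + 1) ^ 2).
Proof.
  intros Hx. assert (HP : Rpower x (g + 1) <> 0) by apply Rgt_not_eq, exp_pos.
  replace (wr x / Rpower x (g + 1) ^ 2) with
    ((psi1 x * Rpower x (g + 1) - psi x * ((g + 1) * Rpower x (g + 1 - 1)))
       / Rpower x (g + 1) ^ 2)
    by (unfold wr; replace (g + 1 - 1) with g by ring; field; exact HP).
  apply (is_derive_div psi (fun t => Rpower t (g + 1)));
    [apply is_derive_psi | apply is_derive_Rpower_id, Hx | exact HP].
Qed.

Lemma abs_derive_ratio_le (K x : R) : 1 <= x ->
  Rabs (wr x) <= K * Rpower x (2 * g - 1) ->
  Rabs (wr x / Rpower x (g + 1) ^ 2) <= K / x ^ 3.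
Proof.
  intros Hx Hwr. assert (Hx0 : 0 < x) by lra.
  set (P := Rpower x (g - 1)). assert (HP : 0 < P) by apply exp_pos.
  assert (E1 : Rpower x (g + 1) = P * x ^ 2)
    by (unfold P; rewrite <- Rpower_plus_pow by exact Hx0; f_equal; simpl; ring).
  assert (E2 : Rpower x (2 * g - 1) = P * P * x ^ 1)
    by (unfold P; rewrite <- Rpower_plus, <- Rpower_plus_pow by exact Hx0;
        f_equal; simpl; ring).
  rewrite E2 in Hwr. rewrite E1.
  assert (HD : 0 < (P * x ^ 2) ^ 2)
    by (apply pow_lt, Rmult_lt_0_compat; [exact HP | apply pow_lt, Hx0]).
  unfold Rdiv. rewrite Rabs_mult, Rabs_inv, (Rabs_pos_eq ((P * x ^ 2) ^ 2)) by lra.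
  apply Rmult_le_reg_r with ((P * x ^ 2) ^ 2); [exact HD|].
  rewrite Rmult_assoc, Rinv_l, Rmult_1_r by lra.
  replace (K * / x ^ 3 * (P * x ^ 2) ^ 2) with (K * (P * P * x ^ 1)) by (field; lra).
  exact Hwr.
Qed.

Lemma ratio_lower_bound (x : R) : 1 <= x -> Rpower ((2 * g - 1) / g) ((g + 1) / 2) <= ratio x.
Proof.
  intros Hx. unfold ratio. assert (0 < Rpower x (g + 1)) by apply exp_pos.
  apply Rmult_le_reg_r with (Rpower x (g + 1)); [lra|].
  unfold Rdiv. rewrite Rmult_assoc, Rinv_l, Rmult_1_r by lra. apply power_le_psi, Hx.
Qed.

Lemma ratio_asymptotics :
  exists c K, 0 < c /\ 0 <= K /\ forall x, 1 <= x -> Rabs (ratio x - c) <= K / x ^ 2.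
Proof.
  destruct abs_wr_le as [K HK].
  assert (HK0 : 0 <= K).
  { specialize (HK 1 (Rle_refl 1)). rewrite Rpower_1_l in HK.
    pose proof (Rabs_pos (wr 1)). lra. }
  destruct (ex_lim_of_sub_le ratio (fun t => - (K / (2 * t ^ 2))) 1) as [c Hc].
  - intros x y Hxy.
    apply (abs_sub_le_of_abs_derive_le ratio (fun t => wr t / Rpower t (g + 1) ^ 2)
             (fun t => - (K / (2 * t ^ 2))) (fun t => K / t ^ 3)); [lra | | |].
    + intros t Ht. apply is_derive_ratio. lra.
    + intros t Ht. auto_derive; [nra | field; nra].
    + intros t Ht. apply abs_derive_ratio_le, HK; lra.
  - intros x Hx. enough (0 <= K / (2 * x ^ 2)) by lra.
    apply Rmult_le_pos; [lra | apply Rlt_le, Rinv_0_lt_compat; nra].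
  - assert (Hc2 : forall x, 1 <= x -> Rabs (ratio x - c) <= K / 2 / x ^ 2).
    { intros x Hx. replace (K / 2 / x ^ 2) with (- - (K / (2 * x ^ 2))) by (field; nra).
      now apply Hc. }
    exists c, (K / 2). split; [|split; [lra | exact Hc2]].
    apply Rlt_le_trans with (Rpower ((2 * g - 1) / g) ((g + 1) / 2)); [apply exp_pos|].
    apply (le_of_abs_sub_le_div_sqr ratio _ _ (K / 2)); [lra | apply ratio_lower_bound | exact Hc2].
Qed.

Lemma remainder_ok_psi : exists c, 0 < c /\
  remainder_ok g psi c 1 (fun v => psi v / (c * Rpower (Rabs v) (g + 1)) - 1).
Proof.
  destruct ratio_asymptotics as [c [K [Hc [HK Hratio]]]].
  exists c. split; [exact Hc|].
  assert (HP : forall v, 0 < Rpower (Rabs v) (g + 1)) by (intros v; apply exp_pos).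
  assert (Hrem : forall v, 1 <= Rabs v ->
            Rabs (psi v / (c * Rpower (Rabs v) (g + 1)) - 1) <= K / c * / Rabs v ^ 2).
  { intros v Hv. specialize (HP v).
    replace (psi v / (c * Rpower (Rabs v) (g + 1)) - 1) with ((ratio (Rabs v) - c) / c)
      by (unfold ratio; rewrite psi_abs; field; lra).
    unfold Rdiv. rewrite Rabs_mult, (Rabs_pos_eq (/ c)) by (apply Rlt_le, Rinv_0_lt_compat, Hc).
    replace (K * / c * / Rabs v ^ 2) with (K / Rabs v ^ 2 * / c) by (field; split; nra).
    apply Rmult_le_compat_r; [apply Rlt_le, Rinv_0_lt_compat, Hc | apply Hratio, Hv]. }
  split; [|split].
  - exists (K / c). intros v Hv. eapply Rle_trans; [apply Hrem, Hv|].
    rewrite <- (Rmult_1_r (K / c)) at 2.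
    apply Rmult_le_compat_l; [apply Rmult_le_pos; [lra | apply Rlt_le, Rinv_0_lt_compat, Hc]|].
    rewrite <- Rinv_1. apply Rinv_le_contravar; [lra | nra].
  - exists (K / c), 1. exact Hrem.
  - intros v Hv. specialize (HP v). field. lra.
Qed.

End Psi.

Lemma remainder_ok_unique (g : R) (f : R -> R) (c v0 : R) (Rm Rm' : R -> R) : c <> 0 ->
  remainder_ok g f c v0 Rm -> remainder_ok g f c v0 Rm' ->
  forall v, v0 <= Rabs v -> Rm' v = Rm v.
Proof.
  intros Hc [_ [_ Hf]] [_ [_ Hf']] v Hv.
  assert (HP : 0 < Rpower (Rabs v) (g + 1)) by apply exp_pos.
  specialize (Hf v Hv). specialize (Hf' v Hv). rewrite Hf in Hf'.
  apply Rmult_eq_reg_l with (c * Rpower (Rabs v) (g + 1));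
    [nra | apply Rmult_integral_contrapositive; lra].
Qed.

Theorem lemma2p2 (gamma : R) (hgamma : 1 / 2 < gamma) :
  exists psi : R -> R,
    (* existence of a positive smooth solution of the Cauchy problem *)
    smooth psi /\ (forall v, 0 < psi v) /\ cauchy_sol gamma psi /\
    (* uniqueness among positive smooth solutions *)
    (forall phi : R -> R, smooth phi -> (forall v, 0 < phi v) ->
        cauchy_sol gamma phi -> forall v, phi v = psi v) /\
    (* (1) evenness and positivity *)
    (forall v, psi (- v) = psi v /\ 0 < psi v) /\
    (* (2) asymptotics, with a unique remainder *)
    (exists c v0 : R, 0 < c /\ 0 < v0 /\
       exists Rm : R -> R, remainder_ok gamma psi c v0 Rm /\
         (forall Rm' : R -> R, remainder_ok gamma psi c v0 Rm' ->
            forall v, v0 <= Rabs v -> Rm' v = Rm v)).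
Proof.
  assert (Hpos : forall v, 0 < psi gamma v)
    by (intros v; pose proof (psi_ge_1 gamma hgamma v); lra).
  exists (psi gamma). split; [|split; [|split; [|split; [|split]]]].
  - exact (smooth_psi gamma hgamma).
  - exact Hpos.
  - exact (cauchy_sol_psi gamma hgamma).
  - intros phi Hsmooth _ Hsol. exact (cauchy_sol_unique gamma hgamma phi Hsmooth Hsol).
  - intros v. split; [exact (psi_opp gamma hgamma v) | apply Hpos].
  - destruct (remainder_ok_psi gamma hgamma) as [c [Hc Hrem]].
    exists c, 1. split; [exact Hc|]. split; [lra|].
    eexists. split; [exact Hrem|].
    intros Rm' Hrem'. apply (remainder_ok_unique _ _ _ _ _ _ (Rgt_not_eq _ _ Hc) Hrem Hrem').
Qed.
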